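(* Let $\Delta_0, \ldots, \Delta_n$ be a sequence of positive integers with $n \geq 1$. Then there exist indices $\alpha, \beta \in \{0,1,\ldots,n\}$ such that: (1) $\alpha < \beta$; (2) $\Delta_j > \max(\Delta_\alpha, \Delta_\beta)$ for every $j \in \{0,\ldots,\alpha-1\} \cup \{\beta+1,\ldots,n\}$; (3) the inequality $\Delta_t < \max(\Delta_\alpha,\Delta_\beta)$ holds for at most one index $t \in \{\alpha, \alpha+1, \ldots, \beta\}$. *)

From Stdlib Require Import Arith Lia.

(* Let M be the least value such that two distinct indices carry values at most M,
   i.e. the second smallest entry of Delta counted with multiplicity. Take alpha
   the first and beta the last index with Delta <= M. Every index outside
   [alpha, beta] carries a value above M, the two endpoints realise
   max (Delta alpha) (Delta beta) = M, and two indices with value below M would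
   contradict the minimality of M. *)

From Stdlib Require Import Arith Lia Classical Wf_nat.

Lemma exists_least (P : nat -> Prop) m :
  P m -> exists k, P k /\ forall j, P j -> k <= j.
Proof.
  intros Pm.
  destruct (dec_inh_nat_subset_has_unique_least_element P (fun k => classic (P k)))
    as [k [[Pk k_least] _]]; eauto.
Qed.

Lemma exists_greatest_le (P : nat -> Prop) n m :
  m <= n -> P m -> exists k, m <= k <= n /\ P k /\ forall j, j <= n -> P j -> j <= k.
Proof.
  intros m_le_n Pm.
  destruct (exists_least (fun d => d <= n /\ P (n - d)) (n - m)) as [d [[d_le_n Pd] d_least]].
  { split; [lia | now replace (n - (n - m)) with m by lia]. }
  exists (n - d); repeat split; auto; try lia.
  - enough (d <= n - m) by lia.
    apply d_least; split; [lia | now replace (n - (n - m)) with m by lia].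
  - intros j j_le_n Pj.
    enough (d <= n - j) by lia.
    apply d_least; split; [lia | now replace (n - (n - j)) with j by lia].
Qed.

Section SecondSmallest.

Variables (n : nat) (Delta : nat -> nat).

Definition two_below (M : nat) : Prop :=
  exists i j, i < j <= n /\ Delta i <= M /\ Delta j <= M.

Variable M : nat.
Hypothesis M_least : forall M', two_below M' -> M <= M'.

Lemma max_pair_ge_least i j : i < j <= n -> M <= Nat.max (Delta i) (Delta j).
Proof. intros ij. apply M_least; exists i, j; repeat split; lia. Qed.

Lemma at_most_one_below_least t1 t2 :
  t1 <= n -> Delta t1 < M -> t2 <= n -> Delta t2 < M -> t1 = t2.
Proof.
  intros t1_le below1 t2_le below2.
  destruct (Nat.lt_trichotomy t1 t2) as [lt | [eq | gt]]; auto.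
  - pose proof (max_pair_ge_least t1 t2); lia.
  - pose proof (max_pair_ge_least t2 t1); lia.
Qed.

End SecondSmallest.

Theorem lemma2p8 (n : nat) (Delta : nat -> nat)
  (Hn : 1 <= n) (Hpos : forall i, i <= n -> 0 < Delta i) :
  exists alpha beta : nat,
    alpha < beta /\ beta <= n /\
    (forall j, (j < alpha \/ (beta < j /\ j <= n)) ->
        Delta j > Nat.max (Delta alpha) (Delta beta)) /\
    (forall t1 t2,
        alpha <= t1 <= beta -> Delta t1 < Nat.max (Delta alpha) (Delta beta) ->
        alpha <= t2 <= beta -> Delta t2 < Nat.max (Delta alpha) (Delta beta) ->
        t1 = t2).
Proof.
  destruct (exists_least (two_below n Delta) (Nat.max (Delta 0) (Delta 1)))
    as [M [[i [j [ij [Di Dj]]]] M_least]].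
  { exists 0, 1; repeat split; lia. }
  destruct (exists_least (fun a => Delta a <= M) i Di) as [alpha [Dalpha alpha_first]].
  destruct (exists_greatest_le (fun b => Delta b <= M) n j ltac:(lia) Dj)
    as [beta [j_beta [Dbeta beta_last]]].
  assert (alpha_i : alpha <= i) by auto.
  assert (max_eq : Nat.max (Delta alpha) (Delta beta) = M).
  { pose proof (max_pair_ge_least n Delta M M_least alpha beta); lia. }
  exists alpha, beta; rewrite max_eq; repeat split; try lia.
  - intros x [x_before | [x_after x_le_n]];
      destruct (Nat.le_gt_cases (Delta x) M) as [Dx | Dx]; auto.
    + specialize (alpha_first x Dx); lia.
    + specialize (beta_last x x_le_n Dx); lia.
  - intros t1 t2 t1_in below1 t2_in below2.
    apply (at_most_one_below_least n Delta M M_least); lia.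
Qed.
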